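(* Consider the two-route traffic model described in the context, under the assumptions (A1)–(A5) listed there. Let $P:=\{x\in\Omega:\ 0\le x_1\le C_1,\ 0\le x_2\le C_2\}$. Then: (i) $P$ is positively invariant, i.e., every solution $x(t)$ of the system with $x(0)\in P$ satisfies $x(t)\in P$ for all $t\ge 0$; (ii) $P$ is globally attractive, i.e., for every open neighbourhood $U$ of $P$ and every initial condition $x_0\in\Omega$ there exists $\tau(x_0)>0$ such that the solution starting at $x_0$ lies in $U$ for all $t>\tau(x_0)$.
   Context: Two routes $i=1,2$ connect an origin to a destination. For each route there are positive parameters $B_i$ (jam density), $C_i$ (critical density), $F_i$ (maximum capacity) with $C_i<B_i$; the traffic demand is a constant $\phi>0$. Set $v_i=F_i/C_i$. The state is $x=(x_1,x_2)\in\Omega:=[0,B_1]\times[0,B_2]$ and evolves by $\dot x_i=\min\{\phi R_i(x),S_i(x_i)\}-D_i(x_i)$, $i=1,2$, where the supply is $S_i(x_i)=F_i$ if $x_i<C_i$ and $S_i(x_i)=\frac{F_i}{B_i-C_i}(B_i-x_i)$ otherwise, and the demand is $D_i(x_i)=v_ix_i$ if $x_i<C_i$ and $D_i(x_i)=F_i$ otherwise. The routing ratios are $R_i(x)=(1-\alpha)r_i^0+\alpha\, r_i(\tau(x))$, where $\alpha\in(0,1]$ (penetration rate), $r_1^0,r_2^0\ge 0$ are constants with $r_1^0+r_2^0=1$, $\tau(x)=(\tau_1(x_1),\tau_2(x_2))$ with each travel time $\tau_i$ a $C^1$ strictly increasing function, and the functions $r_i$ satisfy $0\le r_i(\tau(x))\le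 1$, $r_1(\tau(x))+r_2(\tau(x))=1$ for all $x\in\Omega$, and $x\mapsto r_i(\tau(x))$ is globally Lipschitz and $C^1$ on $\Omega$. Assumptions: (A1) $\phi<F_1+F_2$; (A2)–(A3) the properties of $\tau_i$, $r_i$ just listed; (A4) the routing ratios are strictly monotone: $\partial R_i/\partial \tau_j>0$ for $i\neq j$; (A5) $F_i>(1-\alpha)\phi r_i^0$ for $i=1,2$. *)

From Stdlib Require Import Reals.
From Coquelicot Require Import Coquelicot.
Open Scope R_scope.

Record model := Model {
  B1 : R; B2 : R;            (* jam densities *)
  C1 : R; C2 : R;            (* critical densities *)
  F1 : R; F2 : R;            (* maximum capacities *)
  phi : R;                   (* constant demand *)
  alpha : R;                 (* penetration rate *)
  r01 : R; r02 : R;          (* constant (uninformed) routing ratios *)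
  tau1 : R -> R; tau2 : R -> R;        (* travel times tau_i(x_i) *)
  r1 : R -> R -> R; r2 : R -> R -> R   (* r_i as functions of (tau_1, tau_2) *)
}.

(** Supply S_i and demand D_i (v_i = F_i / C_i). *)
Definition supply (F B C x : R) : R :=
  if Rlt_dec x C then F else F / (B - C) * (B - x).
Definition demand (F C x : R) : R :=
  if Rlt_dec x C then (F / C) * x else F.

Definition Rt1 (m : model) (t1 t2 : R) : R := (1 - alpha m) * r01 m + alpha m * r1 m t1 t2.
Definition Rt2 (m : model) (t1 t2 : R) : R := (1 - alpha m) * r02 m + alpha m * r2 m t1 t2.

Definition Rx1 (m : model) (x1 x2 : R) : R := Rt1 m (tau1 m x1) (tau2 m x2).
Definition Rx2 (m : model) (x1 x2 : R) : R := Rt2 m (tau1 m x1) (tau2 m x2).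

Definition field1 (m : model) (x1 x2 : R) : R :=
  Rmin (phi m * Rx1 m x1 x2) (supply (F1 m) (B1 m) (C1 m) x1) - demand (F1 m) (C1 m) x1.
Definition field2 (m : model) (x1 x2 : R) : R :=
  Rmin (phi m * Rx2 m x1 x2) (supply (F2 m) (B2 m) (C2 m) x2) - demand (F2 m) (C2 m) x2.

Definition inOmega (m : model) (x1 x2 : R) : Prop :=
  0 <= x1 <= B1 m /\ 0 <= x2 <= B2 m.
Definition inP (m : model) (x1 x2 : R) : Prop :=
  0 <= x1 <= C1 m /\ 0 <= x2 <= C2 m.

Definition C1_on_Omega (m : model) (g : R -> R -> R) : Prop :=
  exists d1 d2 : R -> R -> R,
    (forall y1 y2, inOmega m y1 y2 ->
       is_derive (fun s => g s y2) y1 (d1 y1 y2) /\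
       is_derive (fun s => g y1 s) y2 (d2 y1 y2)) /\
    (forall y1 y2, inOmega m y1 y2 -> forall eps : R, 0 < eps ->
       exists delta : R, 0 < delta /\ forall z1 z2, inOmega m z1 z2 ->
         Rabs (z1 - y1) < delta -> Rabs (z2 - y2) < delta ->
         Rabs (d1 z1 z2 - d1 y1 y2) < eps /\ Rabs (d2 z1 z2 - d2 y1 y2) < eps).

Definition Lipschitz_on_Omega (m : model) (g : R -> R -> R) : Prop :=
  exists L : R, forall x1 x2 y1 y2, inOmega m x1 x2 -> inOmega m y1 y2 ->
    Rabs (g x1 x2 - g y1 y2) <= L * (Rabs (x1 - y1) + Rabs (x2 - y2)).

Definition C1_strict_incr (f : R -> R) : Prop :=
  (exists df : R -> R, (forall y, is_derive f y (df y)) /\ (forall y, continuous df y)) /\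
  (forall a b, a < b -> f a < f b).

Definition assumptions (m : model) : Prop :=
  0 < B1 m /\ 0 < B2 m /\ 0 < C1 m /\ 0 < C2 m /\ 0 < F1 m /\ 0 < F2 m /\
  C1 m < B1 m /\ C2 m < B2 m /\ 0 < phi m /\
  0 < alpha m /\ alpha m <= 1 /\
  0 <= r01 m /\ 0 <= r02 m /\ r01 m + r02 m = 1 /\
  phi m < F1 m + F2 m /\
  C1_strict_incr (tau1 m) /\ C1_strict_incr (tau2 m) /\
  (forall x1 x2, inOmega m x1 x2 ->
     0 <= r1 m (tau1 m x1) (tau2 m x2) <= 1 /\
     0 <= r2 m (tau1 m x1) (tau2 m x2) <= 1 /\
     r1 m (tau1 m x1) (tau2 m x2) + r2 m (tau1 m x1) (tau2 m x2) = 1) /\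
  Lipschitz_on_Omega m (fun x1 x2 => r1 m (tau1 m x1) (tau2 m x2)) /\
  Lipschitz_on_Omega m (fun x1 x2 => r2 m (tau1 m x1) (tau2 m x2)) /\
  C1_on_Omega m (fun x1 x2 => r1 m (tau1 m x1) (tau2 m x2)) /\
  C1_on_Omega m (fun x1 x2 => r2 m (tau1 m x1) (tau2 m x2)) /\
  (forall x1 x2, inOmega m x1 x2 ->
     (exists d, is_derive (fun s => Rt1 m (tau1 m x1) s) (tau2 m x2) d /\ 0 < d) /\
     (exists d, is_derive (fun s => Rt2 m s (tau2 m x2)) (tau1 m x1) d /\ 0 < d)) /\
  F1 m > (1 - alpha m) * phi m * r01 m /\ F2 m > (1 - alpha m) * phi m * r02 m.

Definition is_solution (m : model) (x1 x2 : R -> R) : Prop :=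
  (forall t, 0 <= t -> inOmega m (x1 t) (x2 t)) /\
  (forall t, 0 < t ->
     is_derive x1 t (field1 m (x1 t) (x2 t)) /\
     is_derive x2 t (field2 m (x1 t) (x2 t))) /\
  filterlim x1 (at_right 0) (locally (x1 0)) /\
  filterlim x2 (at_right 0) (locally (x2 0)).

Definition open2 (U : R -> R -> Prop) : Prop :=
  forall p1 p2, U p1 p2 -> exists eps : R, 0 < eps /\
    forall q1 q2, Rabs (q1 - p1) < eps -> Rabs (q2 - p2) < eps -> U q1 q2.

(* Only congestion matters.  In the congested regime [x_i >= C_i] the inflow
   is at most the supply [F_i (B_i - x_i) / (B_i - C_i)] while the outflow is
   the full capacity [F_i], so [x_i' <= - F_i / (B_i - C_i) * (x_i - C_i)]
   whatever the other route does.  Hence each coordinate can never cross its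
   critical density upwards, and above [C_i + e] it decreases at a uniform
   rate, so it falls below [C_i + e] in bounded time.  Compactness of [P]
   turns "every coordinate below [C_i + e]" into "inside U" for small [e]. *)

From Stdlib Require Import Reals Lra ClassicalEpsilon.
From Coquelicot Require Import Coquelicot.
Open Scope R_scope.

Section ScalarTrajectory.

Variables f df : R -> R.
Hypothesis f_derive : forall u, 0 < u -> is_derive f u (df u).

Lemma trajectory_continuous u : 0 < u -> continuous f u.
Proof.
  intros Hu. apply (@ex_derive_continuous R_AbsRing R_NormedModule).
  exists (df u). exact (f_derive u Hu).
Qed.

Lemma trajectory_MVT s t : 0 < s <= t ->
  exists xi, s <= xi <= t /\ f t - f s = df xi * (t - s).
Proof.
  intros Hst.
  destruct (MVT_gen f s t df) as [xi [Hxi Heq]];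
    rewrite ?Rmin_left, ?Rmax_right in * by lra.
  - intros x Hx. apply f_derive. lra.
  - intros x Hx. apply continuity_pt_filterlim, trajectory_continuous. lra.
  - exists xi. split; assumption.
Qed.

Lemma trajectory_stays_below c s t :
  (forall u, 0 < u -> c < f u -> df u < 0) ->
  0 < s <= t -> f s <= c -> f t <= c.
Proof.
  intros Hneg Hst Hfs.
  destruct (Rle_lt_dec (f t) c) as [|Hft]; [assumption | exfalso].
  destruct (continuous_ab_maj_consistent f s t) as [M [HmaxM HM]];
    [lra | intros u Hu; apply trajectory_continuous; lra |].
  assert (HfM : c < f M) by (specialize (HmaxM t); lra).
  assert (HsM : s < M) by (destruct (Req_dec M s); subst; lra).
  destruct (trajectory_continuous M ltac:(lra) _ (open_gt c (f M) HfM))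
    as [eps Heps].
  (* just left of the maximum [M] the function is above [c], hence decreasing *)
  set (h := Rmin (eps / 2) ((M - s) / 2)).
  assert (Hh : 0 < h <= eps / 2 /\ h <= (M - s) / 2).
  { pose proof (cond_pos eps). unfold h.
    split; [split; [apply Rmin_glb_lt|apply Rmin_l]|apply Rmin_r]; lra. }
  destruct (trajectory_MVT (M - h) M) as [xi [Hxi Heq]]; [lra|].
  assert (Hdxi : df xi < 0).
  { apply Hneg; [lra|]. apply Heps. change (Rabs (xi - M) < eps).
    rewrite Rabs_left1 by lra. lra. }
  assert (f (M - h) <= f M) by (apply HmaxM; lra).
  assert (df xi * (M - (M - h)) < 0) by (apply Rmult_neg_pos; lra).
  lra.
Qed.

Lemma trajectory_stays_below_from_0 c :
  (forall u, 0 < u -> c < f u -> df u < 0) ->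
  filterlim f (at_right 0) (locally (f 0)) -> f 0 <= c ->
  forall t, 0 <= t -> f t <= c.
Proof.
  intros Hneg Hright Hf0 t Ht.
  destruct (Req_dec t 0) as [->|Ht0]; [assumption|].
  destruct (Rle_lt_dec (f t) c) as [|Hft]; [assumption | exfalso].
  set (c' := (c + f t) / 2).
  destruct (Hright _ (open_lt c' (f 0) ltac:(unfold c'; lra))) as [eps Heps].
  set (s := Rmin (eps / 2) t).
  assert (Hs : 0 < s <= eps / 2 /\ s <= t).
  { pose proof (cond_pos eps). unfold s.
    split; [split; [apply Rmin_glb_lt|apply Rmin_l]|apply Rmin_r]; lra. }
  assert (Hfs : f s < c').
  { apply Heps; [|lra]. change (Rabs (s - 0) < eps).
    rewrite Rminus_0_r, Rabs_pos_eq by lra. pose proof (cond_pos eps). lra. }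
  assert (f t <= c'); [|unfold c' in *; lra].
  apply (trajectory_stays_below c' s t); [|lra|lra].
  intros u Hu Hfu. apply Hneg; [assumption|]. unfold c' in *. lra.
Qed.

Lemma trajectory_eventually_below c a lo hi : 0 < a ->
  (forall u, 0 < u -> lo <= f u <= hi) ->
  (forall u, 0 < u -> c <= f u -> df u <= - a) ->
  exists T, 0 < T /\ forall t, T <= t -> f t <= c.
Proof.
  intros Ha Hbound Hneg.
  assert (Hneg' : forall u, 0 < u -> c < f u -> df u < 0).
  { intros u Hu Hfu. specialize (Hneg u Hu ltac:(lra)). lra. }
  pose proof (Hbound 1 Rlt_0_1) as Hb1.
  (* descending at rate [a] for longer than [L] would leave [[lo, hi]] *)
  set (L := (hi - lo) / a + 1).
  assert (HaL : a * L = hi - lo + a) by (unfold L; field; lra).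
  assert (HL : 0 < L).
  { unfold L. assert (0 <= (hi - lo) / a) by (apply Rdiv_le_0_compat; lra). lra. }
  assert (Hend : f (1 + L) <= c).
  { destruct (Rle_lt_dec (f (1 + L)) c) as [|Hend]; [assumption | exfalso].
    destruct (trajectory_MVT 1 (1 + L)) as [xi [Hxi Heq]]; [lra|].
    assert (Hxi_above : c <= f xi).
    { destruct (Rle_lt_dec c (f xi)) as [|Hlt]; [assumption | exfalso].
      pose proof (trajectory_stays_below c xi (1 + L) Hneg' ltac:(lra) ltac:(lra)).
      lra. }
    pose proof (Hneg xi ltac:(lra) Hxi_above).
    pose proof (Hbound (1 + L) ltac:(lra)).
    replace (1 + L - 1) with L in Heq by ring.
    nra. }
  exists (1 + L). split; [lra|].
  intros t Ht. apply (trajectory_stays_below c (1 + L) t Hneg'); lra.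
Qed.

Section LinearDecayAbove.

Variables k c : R.
Hypothesis k_pos : 0 < k.
Hypothesis decay_above : forall u, 0 < u -> c <= f u -> df u <= - k * (f u - c).

Lemma decay_stays_below :
  filterlim f (at_right 0) (locally (f 0)) -> f 0 <= c ->
  forall t, 0 <= t -> f t <= c.
Proof.
  apply trajectory_stays_below_from_0.
  intros u Hu Hfu. specialize (decay_above u Hu ltac:(lra)). nra.
Qed.

Lemma decay_eventually_below e lo hi : 0 < e ->
  (forall u, 0 < u -> lo <= f u <= hi) ->
  exists T, 0 < T /\ forall t, T <= t -> f t <= c + e.
Proof.
  intros He Hbound.
  apply (trajectory_eventually_below (c + e) (k * e) lo hi);
    [apply Rmult_lt_0_compat; assumption | assumption |].
  intros u Hu Hfu. specialize (decay_above u Hu ltac:(lra)). nra.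
Qed.

End LinearDecayAbove.

End ScalarTrajectory.

Lemma min_supply_sub_demand_le F B C a x : C < B -> C <= x ->
  Rmin a (supply F B C x) - demand F C x <= - (F / (B - C)) * (x - C).
Proof.
  intros HCB Hx. unfold supply, demand.
  destruct (Rlt_dec x C); [lra|].
  pose proof (Rmin_r a (F / (B - C) * (B - x))).
  replace (- (F / (B - C)) * (x - C)) with (F / (B - C) * (B - x) - F)
    by (field; lra).
  lra.
Qed.

Lemma field1_le_congested m y1 y2 : C1 m < B1 m -> C1 m <= y1 ->
  field1 m y1 y2 <= - (F1 m / (B1 m - C1 m)) * (y1 - C1 m).
Proof. apply min_supply_sub_demand_le. Qed.

Lemma field2_le_congested m y1 y2 : C2 m < B2 m -> C2 m <= y2 ->
  field2 m y1 y2 <= - (F2 m / (B2 m - C2 m)) * (y2 - C2 m).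
Proof. apply min_supply_sub_demand_le. Qed.

Lemma near_interval x a b d : a <= b -> 0 <= d -> a - d <= x <= b + d ->
  exists p, a <= p <= b /\ Rabs (x - p) <= d.
Proof.
  intros Hab Hd Hx. exists (Rmax a (Rmin x b)).
  unfold Rmin; destruct (Rle_dec x b); unfold Rmax; destruct (Rle_dec a _);
    split; try lra; apply Rabs_le; lra.
Qed.

Lemma open2_rectangle_thickening (U : R -> R -> Prop) a1 b1 a2 b2 :
  a1 <= b1 -> a2 <= b2 -> open2 U ->
  (forall y1 y2, a1 <= y1 <= b1 -> a2 <= y2 <= b2 -> U y1 y2) ->
  exists d, 0 < d /\ forall q1 q2,
    a1 - d <= q1 <= b1 + d -> a2 - d <= q2 <= b2 + d -> U q1 q2.
Proof.
  intros Hab1 Hab2 HU Hrect.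
  set (inrect := fun p : R * R => a1 <= fst p <= b1 /\ a2 <= snd p <= b2).
  destruct (choice (fun (p : R * R) (e : posreal) => inrect p ->
      forall q1 q2, Rabs (q1 - fst p) < 2 * e -> Rabs (q2 - snd p) < 2 * e ->
      U q1 q2)) as [delta Hdelta].
  { intros [u v]. destruct (classic (inrect (u, v))) as [Hin|Hout].
    - destruct Hin as [Hu Hv].
      destruct (HU u v (Hrect u v Hu Hv)) as [e [He HUe]].
      exists (mkposreal (e / 2) ltac:(lra)). intros _ q1 q2 H1 H2.
      simpl in H1, H2. apply HUe; lra.
    - exists (mkposreal 1 Rlt_0_1). intros Hin. contradiction. }
  destruct (compactness_value_2d a1 b1 a2 b2 (fun u v => delta (u, v)))
    as [d Hd].
  pose proof (cond_pos d).
  exists (d / 2). split; [lra|]. intros q1 q2 Hq1 Hq2.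
  destruct (near_interval q1 a1 b1 (d / 2) Hab1 ltac:(lra) Hq1) as [p1 [Hp1 Hqp1]].
  destruct (near_interval q2 a2 b2 (d / 2) Hab2 ltac:(lra) Hq2) as [p2 [Hp2 Hqp2]].
  (* [p] lies within [delta (u, v)] of some [(u, v)] with [d <= delta (u, v)],
     so [q] lies within [2 * delta (u, v)] of it *)
  apply NNPP. intros HnotU. apply (Hd p1 p2 Hp1 Hp2).
  intros [u [v (Hu & Hv & Hpu & Hpv & Hdd)]]. apply HnotU.
  apply (Hdelta (u, v) (conj Hu Hv)); simpl;
    apply Rabs_lt_between' in Hpu, Hpv; apply Rabs_le_between' in Hqp1, Hqp2;
    apply Rabs_lt_between'; lra.
Qed.

Theorem lemma1 (m : model) (Hm : assumptions m) :
  (* (i) P is positively invariant *)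
  (forall x1 x2 : R -> R, is_solution m x1 x2 -> inP m (x1 0) (x2 0) ->
     forall t, 0 <= t -> inP m (x1 t) (x2 t)) /\
  (* (ii) P is globally attractive *)
  (forall U : R -> R -> Prop, open2 U -> (forall y1 y2, inP m y1 y2 -> U y1 y2) ->
   forall x1 x2 : R -> R, is_solution m x1 x2 -> inOmega m (x1 0) (x2 0) ->
     exists T : R, 0 < T /\ forall t, T < t -> U (x1 t) (x2 t)).
Proof.
  destruct Hm as (_ & _ & HC1 & HC2 & HF1 & HF2 & HCB1 & HCB2 & _).
  set (k1 := F1 m / (B1 m - C1 m)); set (k2 := F2 m / (B2 m - C2 m)).
  assert (Hk1 : 0 < k1) by (apply Rdiv_lt_0_compat; lra).
  assert (Hk2 : 0 < k2) by (apply Rdiv_lt_0_compat; lra).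
  pose proof (fun x1 x2 u (_ : 0 < u) =>
    field1_le_congested m (x1 u) (x2 u) HCB1) as Hdecay1.
  pose proof (fun x1 x2 u (_ : 0 < u) =>
    field2_le_congested m (x1 u) (x2 u) HCB2) as Hdecay2.
  split.
  - intros x1 x2 (HO & HD & Hright1 & Hright2) [[_ H01] [_ H02]] t Ht.
    destruct (HO t Ht) as [[H1 _] [H2 _]].
    split; split; try assumption.
    + exact (decay_stays_below x1 _ (fun u Hu => proj1 (HD u Hu)) k1 (C1 m)
        Hk1 (Hdecay1 x1 x2) Hright1 H01 t Ht).
    + exact (decay_stays_below x2 _ (fun u Hu => proj2 (HD u Hu)) k2 (C2 m)
        Hk2 (Hdecay2 x1 x2) Hright2 H02 t Ht).
  - intros U HU HPU x1 x2 (HO & HD & _ & _) _.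
    destruct (open2_rectangle_thickening U 0 (C1 m) 0 (C2 m))
      as [d [Hd HUd]]; try lra; [assumption | intros; apply HPU; split; lra |].
    destruct (decay_eventually_below x1 _ (fun u Hu => proj1 (HD u Hu)) k1 (C1 m)
      Hk1 (Hdecay1 x1 x2) d 0 (B1 m) Hd) as [T1 [HT1 Hx1]].
    { intros u Hu. apply (HO u). lra. }
    destruct (decay_eventually_below x2 _ (fun u Hu => proj2 (HD u Hu)) k2 (C2 m)
      Hk2 (Hdecay2 x1 x2) d 0 (B2 m) Hd) as [T2 [HT2 Hx2]].
    { intros u Hu. apply (HO u). lra. }
    exists (Rmax T1 T2). pose proof (Rmax_l T1 T2). pose proof (Rmax_r T1 T2).
    split; [lra|]. intros t Ht.
    destruct (HO t ltac:(lra)) as [[? _] [? _]].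
    apply HUd; split; try lra; [apply Hx1 | apply Hx2]; lra.
Qed.
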